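(* Suppose the original system $x^+=f(x,u)$ is cost controllable on a set $S\subseteq\mathbb{R}^n$ (containing $0$ in its interior) with sequence $(B_N)_{N\in\mathbb{N}_0}$. Let $\bar N\in\mathbb{N}$ and suppose Assumption (EB) and Assumption (L) hold on a set $\Omega$ such that $S\oplus\mathcal{B}_{r(\bar N)\eta^\varepsilon}(0)\subseteq\Omega$ for all $\varepsilon\in(0,\bar\varepsilon]$, where $r(\bar N):=\sum_{i=0}^{\bar N-1}\bar L^i$. Then there exists, for every $\varepsilon\in(0,\bar\varepsilon]$, a monotonically increasing finite sequence $(B_N^\varepsilon)_{N\in[1:\bar N]}$ such that for each pair $(\hat x,N)\in S\times[1:\bar N]$ there exists $\mathbf{u}=\mathbf{u}(\hat x)\in\mathcal{U}_N$ with $$V_N^\varepsilon(\hat x)\le J_N^\varepsilon(\hat x,\mathbf{u})\le B_N^\varepsilon\,\ell^\star(\hat x),$$ and $\lim_{\varepsilon\searrow 0}B_N^\varepsilon=B_N$ for every $N\in[1:\bar N]$. The same statement holds with the roles of $f$ and $f^\varepsilon$ interchanged: if the surrogate $f^\varepsilon$ satisfies the growth bound $V^\varepsilon_N(\hat x)\le J^\varepsilon_N(\hat x,\mathbf u)\le B_N\ell^\star(\hat x)$ (with a control sequence keeping the surrogate trajectory in $S$), then the original dynamics $f$ satisfies a growth bound $J_N(\hat x,\mathbf u)\le B^\varepsilon_N\ell^\star(\hat x)$ on $S$ for all $N\in[1:\bar N]$ with $B_N^\varepsilon\to B_N$ as $\varepsilon\searrow0$.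
   Context: Let $\mathbb{U}\subset\mathbb{R}^m$ be convex and compact with $0$ in its interior. The original system is $x^+=f(x,u)$ with $f:\mathbb{R}^n\times\mathbb{U}\to\mathbb{R}^n$ continuous and $f(0,0)=0$. A family of surrogate models $x^+=f^\varepsilon(x,u)$, $f^\varepsilon:\mathbb{R}^n\times\mathbb{U}\to\mathbb{R}^n$, is given for $\varepsilon\in(0,\bar\varepsilon]$, $\bar\varepsilon>0$. Stage cost: $\ell(x,u)=x^\top Qx+u^\top Ru$ with $Q\in\mathbb{R}^{n\times n}$, $R\in\mathbb{R}^{m\times m}$ symmetric positive definite; $\ell^\star(x):=\min_{u\in\mathbb U}\ell(x,u)=\|x\|_Q^2=x^\top Qx$. For $N\in\mathbb{N}\cup\{\infty\}$, $\mathcal{U}_N$ is the set of sequences $\mathbf u=(u(k))_{k=0}^{N-1}\subset\mathbb{U}$ (admissible controls). For $\hat x\in\mathbb{R}^n$ and $\mathbf u\in\mathcal U_N$, $x_{\mathbf u}(0)=\hat x$, $x_{\mathbf u}(k+1)=f(x_{\mathbf u}(k),u(k))$, and $x^\varepsilon_{\mathbf u}(0)=\hat x$, $x^\varepsilon_{\mathbf u}(k+1)=f^\varepsilon(x^\varepsilon_{\mathbf u}(k),u(k))$. Costs: $J_N(\hat x,\mathbf u)=\sum_{k=0}^{N-1}\ell(x_{\mathbf u}(k),u(k))$, $J^\varepsilon_N(\hat x,\mathbf u)=\sum_{k=0}^{N-1}\ell(x^\varepsilon_{\mathbf u}(k),u(k))$; value functions $V_N(\hat x)=\inf_{\mathbf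 u\in\mathcal U_N}J_N(\hat x,\mathbf u)$, $V^\varepsilon_N(\hat x)=\inf_{\mathbf u\in\mathcal U_N}J^\varepsilon_N(\hat x,\mathbf u)$. Assumption (EB) on a set $\Omega\subseteq\mathbb{R}^n$ containing $0$ in its interior: there are constants $c_x^\varepsilon,c_u^\varepsilon,\eta^\varepsilon\ge0$ with $\lim_{\varepsilon\searrow0}\max\{c_x^\varepsilon,c_u^\varepsilon,\eta^\varepsilon\}=0$ such that for all $\varepsilon\in(0,\bar\varepsilon]$, $x\in\Omega$, $u\in\mathbb U$: $\|f(x,u)-f^\varepsilon(x,u)\|\le c_x^\varepsilon\|x\|+c_u^\varepsilon\|u\|$ (proportional bound) and $\|f(x,u)-f^\varepsilon(x,u)\|\le\eta^\varepsilon$ (uniform bound). Assumption (L) on $\Omega$: there are constants $L_f\ge0$ and $\bar L\ge0$ such that for all $x,y\in\Omega$, $u\in\mathbb U$, $\varepsilon\in(0,\bar\varepsilon]$: $\|f(x,u)-f(y,u)\|\le L_f\|x-y\|$ and $\|f^\varepsilon(x,u)-f^\varepsilon(y,u)\|\le L_{f^\varepsilon}\|x-y\|$ with $L_{f^\varepsilon}\le\bar L$. Cost controllability on $S$: there is a monotonically increasing bounded sequence $(B_N)_{N\in\mathbb N_0}$ such that for every $\hat x\in S$ there is $\mathbf u=\mathbf u(\hat x)\in\mathcal U_\infty$ with $x_{\mathbf u}(k)\in S$ for all $k\ge0$ and $V_N(\hat x)\le J_N(\hat x,\mathbf u)\le B_N\ell^\star(\hat x)$ for all $N\in\mathbb N$.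 $\oplus$ denotes Minkowski sum and $\mathcal B_r(0)$ the closed Euclidean ball of radius $r$. *)

From HB Require Import structures.
From mathcomp Require Import all_boot all_order all_algebra.
From mathcomp Require Import all_classical all_reals all_analysis.
Set Implicit Arguments. Unset Strict Implicit. Unset Printing Implicit Defensive.
Import Order.TTheory GRing.Theory Num.Theory.
Import numFieldNormedType.Exports.
Local Open Scope classical_set_scope.
Local Open Scope ring_scope.

Section Defs.
Variable R : realType.

Definition enorm k (x : 'rV[R]_k) : R := Num.sqrt (\sum_(i < k) x 0 i ^+ 2).

Definition qform k (Q : 'M[R]_k) (x : 'rV[R]_k) : R := (x *m Q *m x^T) 0 0.

Definition sym_posdef k (Q : 'M[R]_k) : Prop :=
  Q^T = Q /\ forall x : 'rV[R]_k, x != 0 -> 0 < qform Q x.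

Definition convexR k (U : set 'rV[R]_k) : Prop :=
  forall x y (t : R), U x -> U y -> 0 <= t <= 1 -> U (t *: x + (1 - t) *: y).

Variables n m : nat.
Implicit Types (Q : 'M[R]_n) (Rm : 'M[R]_m).

Definition stage Q Rm (x : 'rV[R]_n) (u : 'rV[R]_m) : R := qform Q x + qform Rm u.

(* l*(x) = min_{u in U} l(x,u) = x^T Q x (0 is in U, R pos. def.) *)
Definition lstar Q (x : 'rV[R]_n) : R := qform Q x.

Fixpoint traj (g : 'rV[R]_n -> 'rV[R]_m -> 'rV[R]_n) (xh : 'rV[R]_n)
  (u : nat -> 'rV[R]_m) (k : nat) : 'rV[R]_n :=
  match k with
  | 0 => xh
  | k'.+1 => g (traj g xh u k') (u k')
  end.

Definition admN (U : set 'rV[R]_m) (N : nat) (u : nat -> 'rV[R]_m) : Prop :=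
  forall k, (k < N)%N -> U (u k).
Definition adminf (U : set 'rV[R]_m) (u : nat -> 'rV[R]_m) : Prop :=
  forall k, U (u k).

Definition costJ Q Rm g (N : nat) (xh : 'rV[R]_n) (u : nat -> 'rV[R]_m) : R :=
  \sum_(k < N) stage Q Rm (traj g xh u k) (u k).

Definition valueV Q Rm (U : set 'rV[R]_m) g (N : nat) (xh : 'rV[R]_n) : R :=
  inf [set costJ Q Rm g N xh u | u in admN U N].

Definition cost_controllable Q Rm (U : set 'rV[R]_m) g (S : set 'rV[R]_n)
  (B : nat -> R) : Prop :=
  {homo B : N1 N2 / (N1 <= N2)%N >-> N1 <= N2} /\
  (exists M : R, forall N, B N <= M) /\
  forall xh, S xh -> exists u, adminf U u /\ (forall k, S (traj g xh u k)) /\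
    forall N, (0 < N)%N ->
      valueV Q Rm U g N xh <= costJ Q Rm g N xh u /\
      costJ Q Rm g N xh u <= B N * lstar Q xh.

Definition minkowski_ball_sub (S : set 'rV[R]_n) (rad : R) (Om : set 'rV[R]_n) : Prop :=
  forall x y, S x -> enorm y <= rad -> Om (x + y).

Definition rsum (L : R) (Nb : nat) : R := \sum_(i < Nb) L ^+ i.

End Defs.

(* Fix a control sequence u that is good for one model: it keeps that model's
   trajectory in S and J_N <= B_N l*(x). Along u the trajectory of the other
   model drifts away by at most r(k) = sum_(i<k) L^i times the one-step model
   error (a discrete Gronwall estimate), and the uniform error bound eta keeps
   it inside Omega, where the estimates hold. As Q and R are positive definite,
   the cost bound controls all states and controls of the good trajectory by a
   multiple of sqrt(l*(x)), so by the proportional error bound the drift is at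
   most r_e sqrt(l*(x)) with r_e -> 0. Expanding the quadratic stage cost, the
   cost of the other model exceeds B_N l*(x) by at most
   N M_Q (2 C r_e + r_e^2) l*(x), where M_Q = sum |Q_ij|; this vanishes as e -> 0. *)
From HB Require Import structures.
From mathcomp Require Import all_boot all_order all_algebra.
From mathcomp Require Import all_classical all_reals all_analysis.
From mathcomp Require Import ring.
Set Implicit Arguments. Unset Strict Implicit. Unset Printing Implicit Defensive.
Import Order.TTheory GRing.Theory Num.Theory.
Import numFieldNormedType.Exports.
Local Open Scope classical_set_scope.
Local Open Scope ring_scope.

Section EuclideanNorm.
Variables (R : realType) (k : nat).
Implicit Types x y : 'rV[R]_k.

Lemma enorm_ge0 x : 0 <= enorm x.
Proof. exact: sqrtr_ge0. Qed.

Lemma enorm_sqr x : enorm x ^+ 2 = \sum_(i < k) x 0 i ^+ 2.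
Proof. by rewrite sqr_sqrtr //; apply: sumr_ge0 => i _; exact: sqr_ge0. Qed.

Lemma enormZ a x : enorm (a *: x) = `|a| * enorm x.
Proof.
rewrite /enorm (eq_bigr (fun i => a ^+ 2 * x 0 i ^+ 2)) => [|i _]; last first.
  by rewrite mxE exprMn.
by rewrite -mulr_sumr sqrtrM ?sqr_ge0 // sqrtr_sqr.
Qed.

Lemma enorm0 : enorm (0 : 'rV[R]_k) = 0.
Proof. by rewrite -(scale0r 0) enormZ normr0 mul0r. Qed.

Lemma enorm_distrC x y : enorm (x - y) = enorm (y - x).
Proof. by rewrite -opprB -scaleN1r enormZ normrN1 mul1r. Qed.

Lemma coord_le_enorm x i : `|x 0 i| <= enorm x.
Proof.
rewrite -sqrtr_sqr ler_sqrt -?enorm_sqr ?sqr_ge0 // enorm_sqr (bigD1 i) //=.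
by rewrite lerDl; apply: sumr_ge0 => j _; exact: sqr_ge0.
Qed.

Lemma enorm_eq0 x : enorm x = 0 -> forall i, x 0 i = 0.
Proof.
by move=> x0 i; apply/eqP; rewrite -normr_eq0 eq_le normr_ge0 andbT -x0 coord_le_enorm.
Qed.

Lemma cauchy_schwarz x y : \sum_(i < k) x 0 i * y 0 i <= enorm x * enorm y.
Proof.
have [x0|x_neq0] := eqVneq (enorm x) 0.
  by rewrite x0 mul0r big1 // => i _; rewrite enorm_eq0 ?mul0r.
have [y0|y_neq0] := eqVneq (enorm y) 0.
  by rewrite y0 mulr0 big1 // => i _; rewrite (enorm_eq0 y0) mulr0.
set a := enorm x; set b := enorm y.
have ab_gt0 : 0 < 2 * (a * b) by rewrite !mulr_gt0 // lt0r ?x_neq0 ?y_neq0 enorm_ge0.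
(* AM-GM termwise: 2ab x_i y_i <= b^2 x_i^2 + a^2 y_i^2, then sum up. *)
have amgm i : 2 * (a * b) * (x 0 i * y 0 i) <= x 0 i ^+ 2 * b ^+ 2 + y 0 i ^+ 2 * a ^+ 2.
  rewrite -subr_ge0 (_ : _ - _ = (x 0 i * b - y 0 i * a) ^+ 2) ?sqr_ge0 //; ring.
rewrite -(ler_pM2l ab_gt0) mulr_sumr.
apply: le_trans (ler_sum _ (fun i _ => amgm i)) _.
rewrite big_split /= -!mulr_suml -!enorm_sqr -/a -/b.
by rewrite (_ : 2 * (a * b) * _ = a ^+ 2 * b ^+ 2 + b ^+ 2 * a ^+ 2) ?lexx //; ring.
Qed.

Lemma enormD x y : enorm (x + y) <= enorm x + enorm y.
Proof.
rewrite -(ler_pXn2r (isT : (0 < 2)%N)) ?nnegrE ?addr_ge0 ?enorm_ge0 //.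
rewrite enorm_sqr (eq_bigr (fun i => x 0 i ^+ 2 + y 0 i ^+ 2 + 2 * (x 0 i * y 0 i)))
  => [|i _]; last by rewrite mxE; ring.
rewrite !big_split /= -mulr_sumr -!enorm_sqr.
have -> : (enorm x + enorm y) ^+ 2 = enorm x ^+ 2 + enorm y ^+ 2 + 2 * (enorm x * enorm y).
  by ring.
by rewrite lerD2l ler_pM2l // cauchy_schwarz.
Qed.

Lemma enorm_continuous : continuous (@enorm R k).
Proof.
have sumsq_continuous : continuous (fun x : 'rV[R]_k => \sum_(i < k) x 0 i ^+ 2).
  apply: (continuous_big add_continuous) => i _ x.
  by apply: continuousM; apply: coord_continuous.
by move=> x; apply: (continuous_comp (sumsq_continuous x)); exact: sqrt_continuous.
Qed.

End EuclideanNorm.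

Section QuadraticForm.
Variables (R : realType) (k : nat) (Q : 'M[R]_k).
Implicit Types x y : 'rV[R]_k.

Definition bform x y := (x *m Q *m y^T) 0 0.

Definition mx_abs_sum := \sum_(i < k) \sum_(j < k) `|Q i j|.

Lemma mx_abs_sum_ge0 : 0 <= mx_abs_sum.
Proof. by do 2![apply: sumr_ge0 => ? _]. Qed.

Lemma bformE x y : bform x y = \sum_(i < k) \sum_(j < k) x 0 i * Q i j * y 0 j.
Proof. by rewrite /bform mxE exchange_big; apply: eq_bigr => j _; rewrite !mxE mulr_suml. Qed.

Lemma bform_le x y : `|bform x y| <= mx_abs_sum * (enorm x * enorm y).
Proof.
rewrite bformE /mx_abs_sum mulr_suml; apply: le_trans (ler_norm_sum _ _ _) _.
apply: ler_sum => i _; rewrite mulr_suml; apply: le_trans (ler_norm_sum _ _ _) _.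
apply: ler_sum => j _; rewrite !normrM [_ * `|Q i j|]mulrC -mulrA ler_wpM2l //.
by rewrite ler_pM ?coord_le_enorm.
Qed.

Lemma bformDl x y z : bform (x + y) z = bform x z + bform y z.
Proof. by rewrite /bform !mulmxDl mxE. Qed.

Lemma bformDr x y z : bform x (y + z) = bform x y + bform x z.
Proof. by rewrite /bform linearD /= mulmxDr mxE. Qed.

Lemma qformZ a x : qform Q (a *: x) = a ^+ 2 * qform Q x.
Proof. by rewrite /qform linearZ /= -scalemxAr -!scalemxAl !mxE mulrA. Qed.

Lemma qformD_le x d :
  qform Q (x + d) <= qform Q x + mx_abs_sum * (2 * enorm x * enorm d + enorm d ^+ 2).
Proof.
rewrite [qform _ _]bformDl !bformDr -!addrA lerD2l.
rewrite (_ : mx_abs_sum * _ = mx_abs_sum * (enorm x * enorm d)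
  + (mx_abs_sum * (enorm d * enorm x) + mx_abs_sum * (enorm d * enorm d))); last by ring.
by rewrite !lerD // (le_trans (ler_norm _) (bform_le _ _)).
Qed.

Lemma qform_continuous : continuous (qform Q).
Proof.
have -> : qform Q = fun x => \sum_(i < k) \sum_(j < k) x 0 i * Q i j * x 0 j.
  by apply/funext => x; exact: bformE.
apply: (continuous_big add_continuous) => i _.
apply: (continuous_big add_continuous) => j _ x.
apply: (@continuousM R 'rV[R]_k); last exact: coord_continuous.
by apply: (@continuousM R 'rV[R]_k); [exact: coord_continuous | exact: cst_continuous].
Qed.

Hypothesis Q_posdef : sym_posdef Q.

Lemma qform_ge0 x : 0 <= qform Q x.
Proof.
have [->|x_neq0] := eqVneq x 0; last exact/ltW/Q_posdef.2.
by rewrite -(scale0r (0 : 'rV[R]_k)) qformZ expr0n mul0r.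
Qed.

(* [c] is the minimum of [qform Q] on the compact unit sphere (empty iff k = 0). *)
Lemma qform_coercive : exists2 c, 0 < c & forall x, c * enorm x ^+ 2 <= qform Q x.
Proof.
pose A := [set x : 'rV[R]_k | enorm x = 1].
suff [c c_gt0 cA] : exists2 c, 0 < c & forall y, A y -> c <= qform Q y.
  exists c => // x; have [x0|x_neq0] := eqVneq (enorm x) 0.
    by rewrite x0 expr0n mulr0 qform_ge0.
  have x_gt0 : 0 < enorm x by rewrite lt0r x_neq0 enorm_ge0.
  have /cA : A ((enorm x)^-1 *: x).
    by rewrite /A /= enormZ ger0_norm ?invr_ge0 ?enorm_ge0 ?mulVf.
  by rewrite qformZ exprVn mulrC ler_pdivlMr ?exprn_gt0.
have [[x0 Ax0]|A0] := pselect (A !=set0); last first.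
  by exists 1 => // y Ay; exfalso; apply: A0; exists y.
have A_compact : compact A.
  apply: bounded_closed_compact.
    exists 1; split; first exact: num_real.
    move=> M M_gt1 y /= Ay; rewrite [leLHS]mx_normrE; apply: bigmax_le => [|[i j] _ /=].
      by rewrite ltW // (lt_trans ltr01).
    by rewrite ord1 (le_trans (coord_le_enorm _ _)) // Ay ltW.
  have -> : A = @enorm R k @^-1` [set 1] by [].
  by move: (@enorm_continuous R k); rewrite continuous_closedP; apply; exact: closed_eq.
have [xm Axm xm_min] := EVT_min_rV (ex_intro _ x0 Ax0) A_compact
  (continuous_subspaceT qform_continuous).
exists (qform Q xm) => [|y Ay]; last by apply: xm_min; rewrite inE.
apply: Q_posdef.2; apply/eqP => xm0; move: Axm; rewrite xm0 inE /= enorm0.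
by move=> /eqP; rewrite eq_sym oner_eq0.
Qed.

End QuadraticForm.

Section GeometricSum.
Variable R : realType.
Implicit Type L : R.

Lemma rsumS L k : rsum L k.+1 = 1 + L * rsum L k.
Proof.
rewrite /rsum big_ord_recl expr0 mulr_sumr.
by congr (_ + _); apply: eq_bigr => i _; rewrite exprS.
Qed.

Lemma rsum_ge0 L k : 0 <= L -> 0 <= rsum L k.
Proof. by move=> L_ge0; apply: sumr_ge0 => i _; exact: exprn_ge0. Qed.

Lemma ler_rsum L k N : 0 <= L -> (k <= N)%N -> rsum L k <= rsum L N.
Proof.
move=> L_ge0 /subnKC <-; rewrite /rsum big_split_ord /= lerDl.
by apply: sumr_ge0 => i _; exact: exprn_ge0.
Qed.

End GeometricSum.

Lemma minkowski_ball_sub_incl (R : realType) n (S Om : set 'rV[R]_n) rad :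
  0 <= rad -> minkowski_ball_sub S rad Om -> S `<=` Om.
Proof. by move=> rad_ge0 SOm x Sx; rewrite -[x]addr0; apply: SOm; rewrite ?enorm0. Qed.

Section Deviation.
Variables (R : realType) (n m : nat) (U : set 'rV[R]_m) (S Om : set 'rV[R]_n).
Variables (g h : 'rV[R]_n -> 'rV[R]_m -> 'rV[R]_n) (L c1 c2 eta : R) (Nb : nat).
Hypotheses (L_ge0 : 0 <= L) (eta_ge0 : 0 <= eta) (c1_ge0 : 0 <= c1) (c2_ge0 : 0 <= c2).
Hypothesis h_lipschitz : forall x y w, Om x -> Om y -> U w ->
  enorm (h x w - h y w) <= L * enorm (x - y).
Hypothesis model_error : forall x w, S x -> U w ->
  enorm (h x w - g x w) <= c1 * enorm x + c2 * enorm w /\ enorm (h x w - g x w) <= eta.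
Hypothesis S_ball_Om : minkowski_ball_sub S (rsum L Nb * eta) Om.

Lemma traj_deviation xh u X W :
  (forall k, S (traj g xh u k)) -> (forall k, U (u k)) ->
  (forall k, (k < Nb)%N -> enorm (traj g xh u k) <= X /\ enorm (u k) <= W) ->
  forall k, (k < Nb)%N ->
    enorm (traj h xh u k - traj g xh u k) <= rsum L k * eta /\
    enorm (traj h xh u k - traj g xh u k) <= rsum L k * (c1 * X + c2 * W).
Proof.
move=> S_traj U_u XW; elim=> [_|k IHk k_lt].
  by rewrite /= subrr enorm0 /rsum big_ord0 !mul0r.
have k_lt' : (k < Nb)%N by exact: ltn_trans k_lt.
have [IH_eta IH_prop] := IHk k_lt'.
set xe := traj h xh u k; set x := traj g xh u k.
have rad_ge0 : 0 <= rsum L Nb * eta by rewrite mulr_ge0 ?rsum_ge0.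
have Om_x : Om x := minkowski_ball_sub_incl rad_ge0 S_ball_Om (S_traj k).
have Om_xe : Om xe.
  rewrite -[xe](subrK x) addrC; apply: S_ball_Om; first exact: S_traj.
  by apply: le_trans IH_eta _; rewrite ler_wpM2r // ler_rsum // ltnW.
have -> : traj h xh u k.+1 - traj g xh u k.+1 = (h xe (u k) - h x (u k)) + (h x (u k) - g x (u k)).
  by rewrite /= addrA subrK.
have lip := h_lipschitz Om_xe Om_x (U_u k).
have [err_prop err_eta] := model_error (S_traj k) (U_u k).
have [X_k W_k] := XW _ k_lt'.
rewrite rsumS; split; rewrite mulrDl mul1r [X in _ <= X]addrC;
  apply: le_trans (enormD _ _) _; apply: lerD.
- by apply: le_trans lip _; rewrite -mulrA ler_wpM2l.
- exact: err_eta.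
- by apply: le_trans lip _; rewrite -mulrA ler_wpM2l.
- by apply: le_trans err_prop _; rewrite lerD // ler_wpM2l.
Qed.

End Deviation.

Lemma le_sqrt_mul_sqrt (R : realType) (c b a p q : R) :
  0 < c -> 0 <= b -> 0 <= a -> c * p ^+ 2 <= q -> q <= b * a ->
  p <= Num.sqrt (b / c) * Num.sqrt a.
Proof.
move=> c_gt0 b_ge0 a_ge0 cp_q q_ba.
have c_ge0 := ltW c_gt0.
rewrite -sqrtrM ?divr_ge0 //; apply: le_trans (ler_norm p) _.
rewrite -sqrtr_sqr ler_sqrt ?mulr_ge0 ?divr_ge0 ?invr_ge0 //.
by rewrite mulrAC ler_pdivlMr // mulrC (le_trans cp_q).
Qed.

Definition cost_gap (R : realType) (M C r : R) (N : nat) : R :=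
  N%:R * (M * (2 * C * r + r ^+ 2)).

Lemma ler_cost_gap (R : realType) (M C r : R) N1 N2 :
  0 <= M -> 0 <= C -> 0 <= r -> (N1 <= N2)%N -> cost_gap M C r N1 <= cost_gap M C r N2.
Proof.
move=> M_ge0 C_ge0 r_ge0 N12.
by rewrite ler_wpM2r ?ler_nat // mulr_ge0 // addr_ge0 ?sqr_ge0 // !mulr_ge0.
Qed.

Lemma cvg_cost_gap0 (R : realType) (T : Type) (F : set_system T) {FF : Filter F}
  (M C : R) (r : T -> R) N :
  r @ F --> 0 -> (fun t => cost_gap M C (r t) N) @ F --> 0.
Proof.
move=> r0; have gap0 : (fun t => cost_gap M C (r t) N) @ F --> cost_gap M C 0 N.
  exact: cvgMl_tmp (cvgMl_tmp (cvgD (cvgMl_tmp r0) (cvgM r0 r0))).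
by rewrite /cost_gap mulr0 expr0n /= addr0 !mulr0 in gap0.
Qed.

Section Cost.
Variables (R : realType) (n m : nat) (Q : 'M[R]_n) (Rm : 'M[R]_m).
Hypotheses (Q_posdef : sym_posdef Q) (Rm_posdef : sym_posdef Rm).

Lemma stage_ge0 x w : 0 <= stage Q Rm x w.
Proof. by rewrite addr_ge0 ?qform_ge0. Qed.

Lemma costJ_ge0 g N xh u : 0 <= costJ Q Rm g N xh u.
Proof. by apply: sumr_ge0 => k _; exact: stage_ge0. Qed.

Lemma stage_le_costJ g N xh u k : (k < N)%N ->
  qform Q (traj g xh u k) <= costJ Q Rm g N xh u /\ qform Rm (u k) <= costJ Q Rm g N xh u.
Proof.
move=> k_lt; have stage_le : stage Q Rm (traj g xh u k) (u k) <= costJ Q Rm g N xh u.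
  rewrite /costJ (bigD1 (Ordinal k_lt)) //= lerDl.
  by apply: sumr_ge0 => i _; exact: stage_ge0.
by split; apply: le_trans stage_le; rewrite ?lerDl ?lerDr qform_ge0.
Qed.

Lemma valueV_le_costJ U g N xh u : admN U N u -> valueV Q Rm U g N xh <= costJ Q Rm g N xh u.
Proof.
move=> u_adm; apply: ge_inf; last by exists u.
by exists 0 => _ [v _ <-]; exact: costJ_ge0.
Qed.

Lemma costJ_perturb_le g h N xh u (rho X : R) : 0 <= rho ->
  (forall k, (k < N)%N -> enorm (traj g xh u k) <= X /\
      enorm (traj h xh u k - traj g xh u k) <= rho) ->
  costJ Q Rm h N xh u <= costJ Q Rm g N xh u + cost_gap (mx_abs_sum Q) X rho N.
Proof.
move=> rho_ge0 close.
have -> : cost_gap (mx_abs_sum Q) X rho N =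
    \sum_(k < N) mx_abs_sum Q * (2 * X * rho + rho ^+ 2).
  by rewrite /cost_gap sumr_const card_ord mulr_natl.
rewrite /costJ -big_split /=.
apply: ler_sum => k _; have [X_k rho_k] := close _ (ltn_ord k).
rewrite /stage addrAC lerD2r -[traj h xh u k](subrK (traj g xh u k)) [_ - _ + _]addrC.
apply: le_trans (qformD_le _ _ _) _; rewrite lerD2l ler_wpM2l ?mx_abs_sum_ge0 //.
by rewrite lerD ?ler_pXn2r ?nnegrE ?enorm_ge0 // -!mulrA ler_wpM2l // ler_pM ?enorm_ge0.
Qed.

Variables (cQ cR : R).
Hypotheses (cQ_gt0 : 0 < cQ) (cR_gt0 : 0 < cR).
Hypotheses (Q_coercive : forall x, cQ * enorm x ^+ 2 <= qform Q x)
  (Rm_coercive : forall w, cR * enorm w ^+ 2 <= qform Rm w).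

Lemma traj_le_sqrt_cost g N xh u b : 0 <= b -> costJ Q Rm g N xh u <= b * lstar Q xh ->
  forall k, (k < N)%N ->
    enorm (traj g xh u k) <= Num.sqrt (b / cQ) * Num.sqrt (lstar Q xh) /\
    enorm (u k) <= Num.sqrt (b / cR) * Num.sqrt (lstar Q xh).
Proof.
move=> b_ge0 J_le k k_lt; have [Qk Rk] := stage_le_costJ g xh u k_lt.
by split; apply: le_sqrt_mul_sqrt (le_trans _ J_le) => //; exact: qform_ge0.
Qed.

Variables (U : set 'rV[R]_m) (S Om : set 'rV[R]_n).
Variables (g h : 'rV[R]_n -> 'rV[R]_m -> 'rV[R]_n) (L c1 c2 eta : R) (Nb : nat).
Hypotheses (L_ge0 : 0 <= L) (eta_ge0 : 0 <= eta) (c1_ge0 : 0 <= c1) (c2_ge0 : 0 <= c2).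
Hypothesis h_lipschitz : forall x y w, Om x -> Om y -> U w ->
  enorm (h x w - h y w) <= L * enorm (x - y).
Hypothesis model_error : forall x w, S x -> U w ->
  enorm (h x w - g x w) <= c1 * enorm x + c2 * enorm w /\ enorm (h x w - g x w) <= eta.
Hypothesis S_ball_Om : minkowski_ball_sub S (rsum L Nb * eta) Om.

Lemma costJ_transfer_le xh u N b :
  (forall k, S (traj g xh u k)) -> adminf U u -> (N <= Nb)%N -> 0 <= b ->
  costJ Q Rm g Nb xh u <= b * lstar Q xh ->
  costJ Q Rm h N xh u <= costJ Q Rm g N xh u +
    cost_gap (mx_abs_sum Q) (Num.sqrt (b / cQ))
      (rsum L Nb * (c1 * Num.sqrt (b / cQ) + c2 * Num.sqrt (b / cR))) N * lstar Q xh.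
Proof.
move=> S_traj U_u N_le b_ge0 J_le.
set a := Num.sqrt (lstar Q xh); set Cx := Num.sqrt (b / cQ); set Cu := Num.sqrt (b / cR).
set r := rsum L Nb * _.
have a_ge0 : 0 <= a := sqrtr_ge0 _.
have bounded := traj_le_sqrt_cost b_ge0 J_le.
have deviation := traj_deviation L_ge0 eta_ge0 c1_ge0 c2_ge0 h_lipschitz model_error
  S_ball_Om S_traj U_u bounded.
have -> : cost_gap (mx_abs_sum Q) Cx r N * lstar Q xh = cost_gap (mx_abs_sum Q) (Cx * a) (r * a) N.
  by rewrite -[lstar Q xh]sqr_sqrtr ?qform_ge0 // /cost_gap -/a; ring.
have r_ge0 : 0 <= r by rewrite mulr_ge0 ?rsum_ge0 ?addr_ge0 ?mulr_ge0 ?sqrtr_ge0.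
apply: costJ_perturb_le => [|k k_lt]; first exact: mulr_ge0.
have k_lt' : (k < Nb)%N := leq_trans k_lt N_le.
split; first by have [] := bounded _ k_lt'.
apply: le_trans (deviation _ k_lt').2 _.
rewrite /r -mulrA; apply: ler_pM; rewrite ?rsum_ge0 ?ler_rsum 1?ltnW //.
  by rewrite addr_ge0 // !mulr_ge0 ?sqrtr_ge0.
by rewrite mulrDl -!mulrA.
Qed.

End Cost.

Lemma squeeze_cvg0_right (R : realType) (epsb : R) (c M : R -> R) : 0 < epsb ->
  (forall e, 0 < e <= epsb -> 0 <= c e <= M e) -> M @ 0^'+ --> 0 -> c @ 0^'+ --> 0.
Proof.
move=> epsb_gt0 cM M0; apply: (squeeze_cvgr _ (cvg_cst 0) M0).
near=> e; apply: cM; apply/andP; split; near: e; [exact: nbhs_right_gt | exact: nbhs_right_le].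
Unshelve. all: end_near.
Qed.

Lemma growth_bound_transfer (R : realType) n m (U : set 'rV[R]_m) (Q : 'M[R]_n) (Rm : 'M[R]_m)
  (g h : R -> 'rV[R]_n -> 'rV[R]_m -> 'rV[R]_n) (epsb : R)
  (S Om : set 'rV[R]_n) (B : nat -> R) (Nb : nat) (c1 c2 eta : R -> R) (L : R) :
  0 < epsb -> sym_posdef Q -> sym_posdef Rm -> (0 < Nb)%N -> 0 <= L ->
  (forall e, 0 < e <= epsb -> 0 <= c1 e /\ 0 <= c2 e /\ 0 <= eta e) ->
  c1 @ 0^'+ --> 0 -> c2 @ 0^'+ --> 0 ->
  (forall e, 0 < e <= epsb -> forall x y w, Om x -> Om y -> U w ->
     enorm (h e x w - h e y w) <= L * enorm (x - y)) ->
  (forall e x w, 0 < e <= epsb -> S x -> U w ->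
     enorm (h e x w - g e x w) <= c1 e * enorm x + c2 e * enorm w /\
     enorm (h e x w - g e x w) <= eta e) ->
  (forall e, 0 < e <= epsb -> cost_controllable Q Rm U (g e) S B) ->
  (forall e, 0 < e <= epsb -> minkowski_ball_sub S (rsum L Nb * eta e) Om) ->
  exists Beps : R -> nat -> R,
    (forall e, 0 < e <= epsb ->
       (forall N1 N2, (1 <= N1)%N -> (N1 <= N2)%N -> (N2 <= Nb)%N ->
          Beps e N1 <= Beps e N2) /\
       (forall xh N, S xh -> (1 <= N <= Nb)%N ->
          exists u, admN U N u /\
            valueV Q Rm U (h e) N xh <= costJ Q Rm (h e) N xh u /\
            costJ Q Rm (h e) N xh u <= Beps e N * lstar Q xh)) /\
    (forall N, (1 <= N <= Nb)%N -> (fun e => Beps e N) @ 0^'+ --> B N).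
Proof.
move=> epsb_gt0 hQ hRm Nb_gt0 L_ge0 err_ge0 c1_0 c2_0 h_lip h_err g_ctrl S_ball.
have [cQ cQ_gt0 Q_coer] := qform_coercive hQ.
have [cR cR_gt0 Rm_coer] := qform_coercive hRm.
have epsb_in : 0 < epsb <= epsb by rewrite epsb_gt0 lexx.
have [B_mono _] := g_ctrl _ epsb_in.
(* [b] bounds the cost over the whole horizon, hence every state and control
   used up to Nb; the max with 0 only keeps the square roots meaningful. *)
set b := Num.max (B Nb) 0; set Cx := Num.sqrt (b / cQ); set Cu := Num.sqrt (b / cR).
have b_ge0 : 0 <= b by rewrite le_max lexx orbT.
pose r e := rsum L Nb * (c1 e * Cx + c2 e * Cu).
exists (fun e N => B N + cost_gap (mx_abs_sum Q) Cx (r e) N); split => [e e_in|N _].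
  have [c1_ge0 [c2_ge0 eta_ge0]] := err_ge0 e e_in.
  split=> [N1 N2 _ N12 _|xh N S_xh /andP[N_ge1 N_le]].
    by rewrite lerD ?B_mono ?ler_cost_gap ?mx_abs_sum_ge0 ?sqrtr_ge0 //
      mulr_ge0 ?rsum_ge0 ?addr_ge0 ?mulr_ge0 ?sqrtr_ge0.
  have [_ [_ ctrl]] := g_ctrl e e_in; have [u [u_adm [S_traj J_le]]] := ctrl xh S_xh.
  exists u; split=> [k _|]; first exact: u_adm.
  split; first by apply: (valueV_le_costJ hQ hRm) => k _; exact: u_adm.
  have J_Nb : costJ Q Rm (g e) Nb xh u <= b * lstar Q xh.
    by apply: le_trans (J_le _ Nb_gt0).2 _; rewrite ler_wpM2r ?qform_ge0 // le_max lexx.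
  apply: le_trans (costJ_transfer_le hQ hRm cQ_gt0 cR_gt0 Q_coer Rm_coer L_ge0 eta_ge0 c1_ge0
    c2_ge0 (h_lip e e_in) (fun x w => h_err e x w e_in) (S_ball e e_in) S_traj u_adm N_le
    b_ge0 J_Nb) _.
  by rewrite mulrDl lerD2r (J_le _ N_ge1).2.
have r0 : r e @[e --> 0^'+] --> rsum L Nb * (0 * Cx + 0 * Cu).
  exact: cvgMl_tmp (cvgD (cvgMr_tmp c1_0) (cvgMr_tmp c2_0)).
rewrite !mul0r addr0 mulr0 in r0.
apply: cvg_trans (cvgD (cvg_cst (B N)) (cvg_cost_gap0 (mx_abs_sum Q) Cx N r0)) _.
by rewrite addr0.
Qed.

Unset Implicit Arguments.
Theorem mainTheorem1 (R : realType) (n m : nat)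
  (U : set 'rV[R]_m) (f : 'rV[R]_n -> 'rV[R]_m -> 'rV[R]_n)
  (epsb : R) (feps : R -> 'rV[R]_n -> 'rV[R]_m -> 'rV[R]_n)
  (Q : 'M[R]_n) (Rm : 'M[R]_m)
  (S Om : set 'rV[R]_n) (B : nat -> R) (Nb : nat)
  (cx cu eta : R -> R) (Lf Lbar : R) :
  convexR U -> compact U -> interior U 0 ->
  {within [set p : 'rV[R]_n * 'rV[R]_m | U p.2], continuous (fun p => f p.1 p.2)} ->
  f 0 0 = 0 ->
  0 < epsb ->
  sym_posdef Q -> sym_posdef Rm ->
  interior S 0 -> interior Om 0 ->
  (0 < Nb)%N ->
  (forall e, 0 < e <= epsb -> 0 <= cx e /\ 0 <= cu e /\ 0 <= eta e) ->
  (fun e => Num.max (cx e) (Num.max (cu e) (eta e))) @ 0^'+ --> (0 : R) ->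
  (forall e x u, 0 < e <= epsb -> Om x -> U u ->
     enorm (f x u - feps e x u) <= cx e * enorm x + cu e * enorm u /\
     enorm (f x u - feps e x u) <= eta e) ->
  0 <= Lf -> 0 <= Lbar ->
  (forall x y u, Om x -> Om y -> U u -> enorm (f x u - f y u) <= Lf * enorm (x - y)) ->
  (forall e, 0 < e <= epsb -> exists Lfe, 0 <= Lfe <= Lbar /\
     forall x y u, Om x -> Om y -> U u ->
       enorm (feps e x u - feps e y u) <= Lfe * enorm (x - y)) ->
  (cost_controllable Q Rm U f S B ->
   (forall e, 0 < e <= epsb -> minkowski_ball_sub S (rsum Lbar Nb * eta e) Om) ->
   exists Beps : R -> nat -> R,
     (forall e, 0 < e <= epsb ->
        (forall N1 N2, (1 <= N1)%N -> (N1 <= N2)%N -> (N2 <= Nb)%N ->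
           Beps e N1 <= Beps e N2) /\
        (forall xh N, S xh -> (1 <= N <= Nb)%N ->
           exists u, admN U N u /\
             valueV Q Rm U (feps e) N xh <= costJ Q Rm (feps e) N xh u /\
             costJ Q Rm (feps e) N xh u <= Beps e N * lstar Q xh)) /\
     (forall N, (1 <= N <= Nb)%N -> (fun e => Beps e N) @ 0^'+ --> B N))
  /\
  ((forall e, 0 < e <= epsb -> cost_controllable Q Rm U (feps e) S B) ->
   (forall e, 0 < e <= epsb -> minkowski_ball_sub S (rsum Lf Nb * eta e) Om) ->
   exists Beps : R -> nat -> R,
     (forall e, 0 < e <= epsb ->
        (forall N1 N2, (1 <= N1)%N -> (N1 <= N2)%N -> (N2 <= Nb)%N ->
           Beps e N1 <= Beps e N2) /\
        (forall xh N, S xh -> (1 <= N <= Nb)%N ->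
           exists u, admN U N u /\
             valueV Q Rm U f N xh <= costJ Q Rm f N xh u /\
             costJ Q Rm f N xh u <= Beps e N * lstar Q xh)) /\
     (forall N, (1 <= N <= Nb)%N -> (fun e => Beps e N) @ 0^'+ --> B N)).
Proof.
move=> _ _ _ _ _ epsb_gt0 hQ hRm _ _ Nb_gt0 err_ge0 err_0 err Lf_ge0 Lbar_ge0 f_lip feps_lip.
have epsb_in : 0 < epsb <= epsb by rewrite epsb_gt0 lexx.
have cx_0 : cx @ 0^'+ --> 0.
  by apply: squeeze_cvg0_right epsb_gt0 _ err_0 => e /err_ge0[-> _]; rewrite le_max lexx.
have cu_0 : cu @ 0^'+ --> 0.
  by apply: squeeze_cvg0_right epsb_gt0 _ err_0 => e /err_ge0[_ [-> _]]; rewrite !le_max lexx orbT.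
have S_Om L : 0 <= L -> minkowski_ball_sub S (rsum L Nb * eta epsb) Om -> S `<=` Om.
  by move=> L_ge0; apply: minkowski_ball_sub_incl; rewrite mulr_ge0 ?rsum_ge0 ?(err_ge0 _ epsb_in).2.2.
split=> [f_ctrl S_ball | feps_ctrl S_ball].
- have SOm := S_Om _ Lbar_ge0 (S_ball _ epsb_in).
  apply: (growth_bound_transfer (g := fun=> f)) cx_0 cu_0 _ _ (fun _ _ => f_ctrl) S_ball => //.
    move=> e e_in x y w Om_x Om_y U_w; have [Le [/andP[Le_ge0 Le_le] Le_lip]] := feps_lip e e_in.
    by apply: le_trans (Le_lip _ _ _ Om_x Om_y U_w) _; rewrite ler_wpM2r ?enorm_ge0.
  by move=> e x w e_in S_x U_w; rewrite !(enorm_distrC (feps e x w)); apply: err => //; exact: SOm.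
- have SOm := S_Om _ Lf_ge0 (S_ball _ epsb_in).
  apply: (growth_bound_transfer (h := fun=> f)) cx_0 cu_0 _ _ feps_ctrl S_ball => //.
  by move=> e x w e_in S_x U_w; apply: err => //; exact: SOm.
Qed.
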